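(* Let $R$ be a localizable archimedean partially ordered commutative ring and $\varphi\in\mathcal{K}(R)$. Then $\operatorname{dom}\widehat\varphi$ is a subring of $R$ and $\widehat\varphi\colon\operatorname{dom}\widehat\varphi\to\mathbb{R}$ is a positive ring morphism. Moreover, if $r\in R$ and $s\in\operatorname{dom}\widehat\varphi\cap\mathrm{Loc}(R)$ satisfy $r/s\in R^{\mathrm{bd}}_{\mathrm{loc}}$, then $r\in\operatorname{dom}\widehat\varphi$.
   Context: Rings are commutative with unit; subrings contain $1$; ring morphisms are unital. A partially ordered commutative ring is a commutative ring $R$ with partial order $\le$, $r\le s\Rightarrow r+t\le s+t$, positive cone $R^+$ closed under multiplication and containing all squares. $\mathbb{N}=\{1,2,\dots\}$, $\mathbb{N}_0=\mathbb{N}\cup\{0\}$. Archimedean: $kg+h\in R^+$ for all $k\in\mathbb{N}$ implies $g\in R^+$. $\mathrm{Loc}(R)$: the $s\in1+R^+$ with $rs\in R^+\Rightarrow r\in R^+$ for all $r$; localizable: each $r$ satisfies $-s\le r\le s$ for some $s\in\mathrm{Loc}(R)$. A ring morphism into $\mathbb{R}$ is positive if it maps $R^+$ (here $(\operatorname{dom}\widehat\varphi)\cap R^+$) into $[0,\infty)$. $\mathscr{C}_{\mathrm{a.e.}}(X)$ for a topological space $X$: continuous real functions defined on dense open subsets of $X$, modulo agreement on a dense open subset of the common domain, with pointwise operations on the intersection of domains. Each $a\in\mathscr{C}_{\mathrm{a.e.}}(X)$ has a unique representative $a_{\max}$ whose domain contains the domain of every representative and which restricts to each representative. $R_{\mathrm{loc}}$: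 fractions $r/s$ ($r\in R$, $s\in\mathrm{Loc}(R)$), $r/s=r'/s'$ iff $rs'=r's$, ordered by $p/q\le r/s$ iff $ps\le rq$. $R^{\mathrm{bd}}_{\mathrm{loc}}=\{a:\exists n\in\mathbb{N}_0,\ -n\le a\le n\}$. $\mathcal{K}(R)$: ring morphisms $\psi\colon R^{\mathrm{bd}}_{\mathrm{loc}}\to\mathbb{R}$ with $\psi(a)\ge0$ for $a\ge0$, weak-$*$ topology. $\mathrm{O}_{s<\infty}=\{\psi:\psi(1/s)>0\}$; for archimedean localizable $R$ these are dense open in $\mathcal{K}(R)$. For $r\in R$, $\widehat r\in\mathscr{C}_{\mathrm{a.e.}}(\mathcal{K}(R))$ is the class of $r_s\colon\mathrm{O}_{s<\infty}\to\mathbb{R}$, $\psi\mapsto\psi(1/s)^{-1}\psi(r/s)$, for any $s\in\mathrm{Loc}(R)$ with $r/s\in R^{\mathrm{bd}}_{\mathrm{loc}}$ (independent of $s$). Define $\operatorname{dom}\widehat\varphi=\{r\in R:\varphi\in\operatorname{dom}\widehat r_{\max}\}$ and $\widehat\varphi(r)=\widehat r_{\max}(\varphi)$ for $r\in\operatorname{dom}\widehat\varphi$. *)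

From HB Require Import structures.
From mathcomp Require Import all_boot all_order all_algebra.
From mathcomp Require Import boolp classical_sets reals.
Set Implicit Arguments. Unset Strict Implicit. Unset Printing Implicit Defensive.
Import Order.TTheory GRing.Theory Num.Theory.
Local Open Scope ring_scope.

Section PORing.
Variable R : comPzRingType.
Variable le : R -> R -> Prop.

Definition po_comring : Prop :=
  [/\ (forall r, le r r),
      (forall r s, le r s -> le s r -> r = s),
      (forall r s t, le r s -> le s t -> le r t) &
      [/\ (forall r s t, le r s -> le (r + t) (s + t)),
      (forall r s, le 0 r -> le 0 s -> le 0 (r * s)) &
      (forall r, le 0 (r * r))]].

Definition archimedean_po : Prop :=
  forall g h, (forall k : nat, (0 < k)%N -> le 0 (g *+ k + h)) -> le 0 g.

Definition isLoc (s : R) : Prop :=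
  le 0 (s - 1) /\ (forall r, le 0 (r * s) -> le 0 r).

Definition localizable : Prop :=
  forall r, exists s, isLoc s /\ le (- s) r /\ le r s.

(* Fractions r/s (s in Loc R) are represented by pairs; order on R_loc:
   p/q <= r/s iff p s <= r q. *)
Definition frac_le (p q r s : R) : Prop := le (p * s) (r * q).

(* r/s is a well-formed element of R_loc lying in R_loc^bd *)
Definition bdfrac (r s : R) : Prop :=
  isLoc s /\ exists n : nat, frac_le (- n%:R) 1 r s /\ frac_le r s n%:R 1.

Variable RR : realType.

(* K(R): positive unital ring morphisms R_loc^bd -> RR, represented as
   functions psi r s = psi(r/s) on representing pairs, constant on
   equivalence classes and (normalisation) 0 on pairs that do not
   represent an element of R_loc^bd. *)
Definition inK (psi : R -> R -> RR) : Prop :=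
  [/\ (forall r s, ~ bdfrac r s -> psi r s = 0),
      (forall r s r' s', bdfrac r s -> bdfrac r' s' -> r * s' = r' * s ->
          psi r s = psi r' s') &
      [/\ (forall r s r' s', bdfrac r s -> bdfrac r' s' ->
          psi (r * s' + r' * s) (s * s') = psi r s + psi r' s'),
      (forall r s r' s', bdfrac r s -> bdfrac r' s' ->
          psi (r * r') (s * s') = psi r s * psi r' s'),
      psi 1 1 = 1 &
      (forall r s, bdfrac r s -> frac_le 0 1 r s -> 0 <= psi r s)]].

(* weak-* topology on K(R), written out via basic neighbourhoods *)
Definition wnbhd (psi : R -> R -> RR) (l : seq (R * R)) (e : RR)
  (chi : R -> R -> RR) : Prop :=
  inK chi /\ forall a, a \in l -> `|chi a.1 a.2 - psi a.1 a.2| < e.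

Definition Kopen (U : (R -> R -> RR) -> Prop) : Prop :=
  (forall chi, U chi -> inK chi) /\
  forall psi, U psi -> exists l e, 0 < e /\ forall chi, wnbhd psi l e chi -> U chi.

Definition Kdense (D : (R -> R -> RR) -> Prop) : Prop :=
  forall V, Kopen V -> (exists chi, V chi) -> exists chi, V chi /\ D chi.

Definition Kdense_open U := Kopen U /\ Kdense U.

Definition Kcont_on (U : (R -> R -> RR) -> Prop) (f : (R -> R -> RR) -> RR) : Prop :=
  forall psi, U psi -> forall e, 0 < e ->
    exists l d, 0 < d /\ forall chi, U chi -> wnbhd psi l d chi ->
      `|f chi - f psi| < e.

Definition Ofin (s : R) (psi : R -> R -> RR) : Prop := inK psi /\ 0 < psi 1 s.

Definition r_s (r s : R) (psi : R -> R -> RR) : RR := (psi 1 s)^-1 * psi r s.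

(* (U, f) is a representative of hat r in C_a.e.(K(R)) *)
Definition hat_rep (r : R) (U : (R -> R -> RR) -> Prop) (f : (R -> R -> RR) -> RR) : Prop :=
  [/\ Kdense_open U, Kcont_on U f &
      exists s, bdfrac r s /\
        exists W, [/\ Kdense_open W, (forall psi, W psi -> U psi /\ Ofin s psi) &
                      forall psi, W psi -> f psi = r_s r s psi]].

(* phi in dom (hat r)_max : the domain of the maximal representative is the
   union of the domains of all representatives *)
Definition dom_hatphi (phi : R -> R -> RR) (r : R) : Prop :=
  exists U f, hat_rep r U f /\ U phi.

(* hat phi (r) = (hat r)_max (phi) *)
Definition hatphi (phi : R -> R -> RR) (r : R) : RR :=
  xget 0 [set c | exists U f, [/\ hat_rep r U f, U phi & f phi = c]].

End PORing.

From HB Require Import structures.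
From mathcomp Require Import all_boot all_order all_algebra.
From mathcomp Require Import boolp classical_sets reals topology normedtype.
From mathcomp Require Import ring lra.
Import Order.TTheory GRing.Theory Num.Theory numFieldNormedType.Exports.
Local Open Scope ring_scope.
Set Implicit Arguments. Unset Strict Implicit.

(* Near a character [psi] with [psi(1/s) > 0], the element [r] is represented
   by [r_s psi = psi(r/s) / psi(1/s)], which does not depend on [s].  Since
   [(r + r')_(st) = r_s + r'_t] and [(r r')_(st) = r_s r'_t], and evaluations
   are weak-* continuous, sums, differences and products of representatives of
   [hat r] and [hat r'] represent [hat (r + r')], [hat (r - r')] and
   [hat (r r')].  A continuous inequality that holds on a dense subset of an
   open set holds on all of it; hence any two representatives agree wherever
   both are defined, so [hatphi] is well defined, additive and multiplicative,
   and positive because [r_s >= 0] for [r >= 0].  Finally, if [r/s] is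
   bounded, [psi |-> psi(r/s) * hat s psi] represents [hat r], because
   [psi(r/s) * s_t = r_t]. *)

Section Localization.
Variables (R : comPzRingType) (le : R -> R -> Prop).
Hypothesis po : po_comring le.

Lemma po_le_trans a b c : le a b -> le b c -> le a c.
Proof. by case: po => _ _ le_tr _; apply: le_tr. Qed.

Lemma po_subr_ge0 a b : le 0 (b - a) <-> le a b.
Proof.
case: po => _ _ _ [leD _ _]; split=> H.
  by have := leD _ _ a H; rewrite add0r subrK.
by have := leD _ _ (- a) H; rewrite subrr.
Qed.

Lemma po_addr_ge0 a b : le 0 a -> le 0 b -> le 0 (a + b).
Proof.
case: po => _ _ _ [leD _ _] ha hb.
by apply: po_le_trans hb _; have := leD _ _ b ha; rewrite add0r.
Qed.

Lemma po_mulr_ge0 a b : le 0 a -> le 0 b -> le 0 (a * b).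
Proof. by case: po => _ _ _ [_ leM _]; apply: leM. Qed.

Lemma po_lexx a : le a a.
Proof. by case: po. Qed.

Lemma po_ler01 : le 0 1.
Proof. by case: po => _ _ _ [_ _ sqr_ge0]; have := sqr_ge0 1; rewrite mulr1. Qed.

Lemma po_ler0n n : le 0 n%:R.
Proof.
elim: n => [|n IHn]; first exact: po_lexx.
by rewrite -addn1 natrD; apply: po_addr_ge0 IHn po_ler01.
Qed.

Lemma isLoc_ge0 s : isLoc le s -> le 0 s.
Proof. by case=> s1_ge0 _; rewrite -(subrK 1 s); apply: po_addr_ge0 s1_ge0 po_ler01. Qed.

Lemma isLoc1 : isLoc le 1.
Proof. by split=> [|r]; rewrite ?subrr ?mulr1 //; apply: po_lexx. Qed.

Lemma isLocM s t : isLoc le s -> isLoc le t -> isLoc le (s * t).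
Proof.
move=> Ls [t1_ge0 Lt]; split=> [|r rst_ge0]; last by apply/Ls.2/Lt; rewrite -mulrA.
have -> : s * t - 1 = s * (t - 1) + (s - 1) by ring.
by apply: po_addr_ge0; [apply: po_mulr_ge0 (isLoc_ge0 Ls) t1_ge0 | case: Ls].
Qed.

Lemma bdfracE r s : bdfrac le r s <->
  isLoc le s /\ exists n, le 0 (r + n%:R * s) /\ le 0 (n%:R * s - r).
Proof.
rewrite /bdfrac /frac_le.
have lowerE n : r * 1 - - n%:R * s = r + n%:R * s by rewrite mulr1 mulNr opprK.
have upperE n : n%:R * s - r * 1 = n%:R * s - r by rewrite mulr1.
split=> -[Ls [n [lo up]]]; split=> //; exists n.
  by rewrite -lowerE -upperE !po_subr_ge0.
by split; rewrite -po_subr_ge0 ?lowerE ?upperE.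
Qed.

Lemma bdfrac_isLoc r s : bdfrac le r s -> isLoc le s.
Proof. by case. Qed.

Lemma bdfrac0 s : isLoc le s -> bdfrac le 0 s.
Proof.
move=> Ls; apply/bdfracE; split=> //; exists 0%N.
by rewrite mul0r add0r subr0; split; apply: po_lexx.
Qed.

Lemma bdfrac1 s : isLoc le s -> bdfrac le 1 s.
Proof.
move=> Ls; apply/bdfracE; split=> //; exists 1%N; rewrite mul1r; split; last by case: Ls.
exact: po_addr_ge0 po_ler01 (isLoc_ge0 Ls).
Qed.

Lemma bdfrac_id s : isLoc le s -> bdfrac le s s.
Proof.
move=> Ls; apply/bdfracE; split=> //; exists 1%N; rewrite mul1r subrr.
by split; [apply: po_addr_ge0; apply: isLoc_ge0 | apply: po_lexx].
Qed.

Lemma bdfracN a t : bdfrac le a t -> bdfrac le (- a) t.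
Proof.
move=> /bdfracE[Lt [n [lo up]]]; apply/bdfracE; split=> //; exists n.
by rewrite opprK addrC; split=> //; rewrite addrC.
Qed.

Lemma bdfracD a b t : bdfrac le a t -> bdfrac le b t -> bdfrac le (a + b) t.
Proof.
move=> /bdfracE[Lt [n [lo_a up_a]]] /bdfracE[_ [m [lo_b up_b]]].
apply/bdfracE; split=> //; exists (n + m)%N; rewrite natrD; split.
  have -> : a + b + (n%:R + m%:R) * t = (a + n%:R * t) + (b + m%:R * t) by ring.
  exact: po_addr_ge0.
have -> : (n%:R + m%:R) * t - (a + b) = (n%:R * t - a) + (m%:R * t - b) by ring.
exact: po_addr_ge0.
Qed.

(* The bound [3nm] comes from writing [xy + 3nm st] and [3nm st - xy] as
   sums of products of the nonnegative [ns -+ x], [mt -+ y], [ns] and [mt]. *)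
Lemma bdfracM x s y t : bdfrac le x s -> bdfrac le y t -> bdfrac le (x * y) (s * t).
Proof.
move=> /bdfracE[Ls [n [lo_x up_x]]] /bdfracE[Lt [m [lo_y up_y]]].
have ns_ge0 : le 0 (n%:R * s) by apply: po_mulr_ge0 (po_ler0n n) (isLoc_ge0 Ls).
have mt_ge0 : le 0 (m%:R * t) by apply: po_mulr_ge0 (po_ler0n m) (isLoc_ge0 Lt).
apply/bdfracE; split; first exact: isLocM.
exists (3 * n * m)%N; split.
  have -> : x * y + (3 * n * m)%:R * (s * t) = (n%:R * s - x) * (m%:R * t - y)
      + n%:R * s * (y + m%:R * t) + m%:R * t * (x + n%:R * s).
    by rewrite !natrM; ring.
  by apply: po_addr_ge0; [apply: po_addr_ge0|]; apply: po_mulr_ge0.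
have -> : (3 * n * m)%:R * (s * t) - x * y = (n%:R * s - x) * (y + m%:R * t)
    + n%:R * s * (m%:R * t - y) + m%:R * t * (x + n%:R * s).
  by rewrite !natrM; ring.
by apply: po_addr_ge0; [apply: po_addr_ge0|]; apply: po_mulr_ge0.
Qed.

Lemma bdfracMr r s t : bdfrac le r s -> isLoc le t -> bdfrac le r (s * t).
Proof. by move=> r_bd Lt; have := bdfracM r_bd (bdfrac1 Lt); rewrite mulr1. Qed.

Lemma bdfracDM x s y t : bdfrac le x s -> bdfrac le y t -> bdfrac le (x + y) (s * t).
Proof.
move=> x_s y_t; apply: bdfracD; first exact: bdfracMr (bdfrac_isLoc y_t).
by rewrite mulrC; apply: bdfracMr (bdfrac_isLoc x_s).
Qed.

Lemma bdfracBM x s y t : bdfrac le x s -> bdfrac le y t -> bdfrac le (x - y) (s * t).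
Proof. by move=> x_s /bdfracN; apply: bdfracDM. Qed.

Lemma bdfrac_trans r s t : bdfrac le r s -> bdfrac le s t -> bdfrac le r t.
Proof.
move=> /bdfracE[_ [n [lo_r up_r]]] /bdfracE[Lt [m [_ up_s]]].
have gap_ge0 : le 0 (n%:R * (m%:R * t - s)) by apply: po_mulr_ge0 (po_ler0n n) up_s.
apply/bdfracE; split=> //; exists (n * m)%N; rewrite natrM; split.
  have -> : r + n%:R * m%:R * t = (r + n%:R * s) + n%:R * (m%:R * t - s) by ring.
  exact: po_addr_ge0.
have -> : n%:R * m%:R * t - r = (n%:R * s - r) + n%:R * (m%:R * t - s) by ring.
exact: po_addr_ge0.
Qed.

Variable RR : realType.
Implicit Types (psi chi : R -> R -> RR) (U D W : (R -> R -> RR) -> Prop).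
Implicit Types (f g : (R -> R -> RR) -> RR).

Lemma inKMr psi r s t : inK le psi -> bdfrac le r s -> isLoc le t ->
  psi r (s * t) = psi r s * psi 1 t.
Proof. by case=> _ _ [_ psiM _ _] r_bd Lt; rewrite -psiM ?mulr1 //; apply: bdfrac1. Qed.

Lemma inKD psi a b t : inK le psi -> bdfrac le a t -> bdfrac le b t ->
  psi (a + b) t = psi a t + psi b t.
Proof.
case=> _ psi_wd [psiD _ _ _] a_t b_t; have Lt := bdfrac_isLoc a_t.
rewrite -psiD //; apply: psi_wd; first exact: bdfracD.
  by rewrite -mulrDl; apply: bdfracM (bdfracD a_t b_t) (bdfrac_id Lt).
by ring.
Qed.

Lemma inK0 psi t : inK le psi -> isLoc le t -> psi 0 t = 0.
Proof.
move=> Kpsi Lt; have := inKD Kpsi (bdfrac0 Lt) (bdfrac0 Lt).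
by rewrite addr0 => /(congr1 (fun v => v - psi 0 t)); rewrite subrr addrK => <-.
Qed.

Lemma inKN psi a t : inK le psi -> bdfrac le a t -> psi (- a) t = - psi a t.
Proof.
move=> Kpsi a_t; have Lt := bdfrac_isLoc a_t; have := inKD Kpsi a_t (bdfracN a_t).
by rewrite subrr inK0 // => /esym/eqP; rewrite addrC addr_eq0 => /eqP.
Qed.

Lemma inK_ge0 psi x s : inK le psi -> bdfrac le x s -> le 0 x -> 0 <= psi x s.
Proof.
by case=> _ _ [_ _ _ psi_ge0] x_s x_ge0; apply: psi_ge0; rewrite // /frac_le mul0r mulr1.
Qed.

Lemma r_s_indep psi r s s' : inK le psi -> bdfrac le r s -> bdfrac le r s' ->
  0 < psi 1 s -> 0 < psi 1 s' -> r_s r s psi = r_s r s' psi.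
Proof.
move=> Kpsi r_bd r_bd' s_pos s'_pos; rewrite /r_s.
have Ls := bdfrac_isLoc r_bd; have Ls' := bdfrac_isLoc r_bd'.
have cross : psi r s * psi 1 s' = psi r s' * psi 1 s by rewrite -!inKMr // mulrC.
have -> : psi r s' = psi r s * psi 1 s' / psi 1 s by rewrite cross mulfK ?gt_eqF.
by field; rewrite !gt_eqF.
Qed.

Lemma r_sD psi x s y t : inK le psi -> bdfrac le x s -> bdfrac le y t ->
  0 < psi 1 s -> 0 < psi 1 t -> r_s (x + y) (s * t) psi = r_s x s psi + r_s y t psi.
Proof.
move=> Kpsi x_s y_t s_pos t_pos; have Ls := bdfrac_isLoc x_s; have Lt := bdfrac_isLoc y_t.
have xE : psi x (s * t) = psi x s * psi 1 t := inKMr Kpsi x_s Lt.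
have yE : psi y (s * t) = psi y t * psi 1 s by rewrite mulrC inKMr.
have oneE : psi 1 (s * t) = psi 1 s * psi 1 t := inKMr Kpsi (bdfrac1 Ls) Lt.
rewrite /r_s inKD // ?xE ?yE ?oneE; first by field; rewrite !gt_eqF.
  exact: bdfracMr.
by rewrite mulrC; apply: bdfracMr.
Qed.

Lemma r_sB psi x s y t : inK le psi -> bdfrac le x s -> bdfrac le y t ->
  0 < psi 1 s -> 0 < psi 1 t -> r_s (x - y) (s * t) psi = r_s x s psi - r_s y t psi.
Proof.
move=> Kpsi x_s y_t s_pos t_pos; rewrite r_sD //; last exact: bdfracN.
by rewrite /r_s inKN // mulrN.
Qed.

Lemma r_sM psi x s y t : inK le psi -> bdfrac le x s -> bdfrac le y t ->
  0 < psi 1 s -> 0 < psi 1 t -> r_s (x * y) (s * t) psi = r_s x s psi * r_s y t psi.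
Proof.
move=> Kpsi x_s y_t s_pos t_pos; have [_ _ [_ psiM _ _]] := Kpsi.
have oneE := inKMr Kpsi (bdfrac1 (bdfrac_isLoc x_s)) (bdfrac_isLoc y_t).
by rewrite /r_s oneE psiM //; field; rewrite !gt_eqF.
Qed.

Lemma r_s_ge0 psi x s : bdfrac le x s -> Ofin le s psi -> le 0 x -> 0 <= r_s x s psi.
Proof.
move=> x_s [Kpsi s_pos] x_ge0.
by rewrite /r_s mulr_ge0 ?(inK_ge0 Kpsi x_s x_ge0) // invr_ge0 ltW.
Qed.

Lemma r_s_frac psi r s t : inK le psi -> bdfrac le r s -> bdfrac le s t ->
  psi r s * r_s s t psi = r_s r t psi.
Proof.
move=> Kpsi r_bd s_t; have [_ psi_wd [_ psiM _ _]] := Kpsi.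
rewrite /r_s mulrCA -psiM //; congr (_ * _); apply: psi_wd.
- exact: bdfracM.
- exact: bdfrac_trans r_bd s_t.
- by ring.
Qed.

Lemma wnbhd_center psi l d : inK le psi -> 0 < d -> wnbhd le psi l d psi.
Proof. by move=> Kpsi d_gt0; split=> // a _; rewrite subrr normr0. Qed.

Lemma wnbhd_sub psi l d chi l' d' : wnbhd le psi l d chi ->
  {subset l' <= l} -> d <= d' -> wnbhd le psi l' d' chi.
Proof. by case=> Kchi near_chi sub_l le_d; split=> // a /sub_l /near_chi /lt_le_trans; apply. Qed.

Lemma wnbhd_catl psi l1 l2 d1 d2 chi :
  wnbhd le psi (l1 ++ l2) (Num.min d1 d2) chi -> wnbhd le psi l1 d1 chi.
Proof. by move/wnbhd_sub; apply=> [a a_l1|]; rewrite ?mem_cat ?a_l1 ?ge_min ?lexx. Qed.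

Lemma wnbhd_catr psi l1 l2 d1 d2 chi :
  wnbhd le psi (l1 ++ l2) (Num.min d1 d2) chi -> wnbhd le psi l2 d2 chi.
Proof. by move/wnbhd_sub; apply=> [a a_l2|]; rewrite ?mem_cat ?a_l2 ?orbT ?ge_min ?lexx ?orbT. Qed.

(* The new radius is the least gap [d - |chi a - psi a|], [a] in [l]. *)
Lemma wnbhd_inner psi chi (l : seq (R * R)) d :
  (forall a, a \in l -> `|chi a.1 a.2 - psi a.1 a.2| < d) ->
  exists2 e, 0 < e & forall chi',
    (forall a, a \in l -> `|chi' a.1 a.2 - chi a.1 a.2| < e) ->
    forall a, a \in l -> `|chi' a.1 a.2 - psi a.1 a.2| < d.
Proof.
elim: l => [|b l IHl] near_chi; first by exists 1.
have sub_l : {subset l <= b :: l} := @mem_behead _ (b :: l).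
have [e e_gt0 inner_l] := IHl (fun a a_l => near_chi a (sub_l a a_l)).
have b_near := near_chi b (mem_head _ _).
exists (Num.min e (d - `|chi b.1 b.2 - psi b.1 b.2|)); first by rewrite lt_min e_gt0 subr_gt0.
move=> chi' near_chi' a; rewrite in_cons => /predU1P[-> | a_l].
  have /andP[_ near_b] : (`|chi' b.1 b.2 - chi b.1 b.2| < e) &&
      (`|chi' b.1 b.2 - chi b.1 b.2| < d - `|chi b.1 b.2 - psi b.1 b.2|).
    by rewrite -lt_min; apply: near_chi'; rewrite mem_head.
  by apply: le_lt_trans (ler_distD (chi b.1 b.2) _ _) _; lra.
apply: inner_l a_l => a' a'_l.
by have /(_ (sub_l a' a'_l)) := near_chi' a'; rewrite lt_min => /andP[].
Qed.

Lemma wnbhd_open psi l d : Kopen le (wnbhd le psi l d).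
Proof.
split=> [chi [] //|chi [Kchi near_chi]].
have [e e_gt0 inner] := wnbhd_inner near_chi.
by exists l, e; split=> // chi' [Kchi' near_chi']; split=> //; apply: inner.
Qed.

Lemma KopenI U W : Kopen le U -> Kopen le W -> Kopen le (fun chi => U chi /\ W chi).
Proof.
move=> [UK Uopen] [_ Wopen]; split=> [chi [/UK] //|psi [Upsi Wpsi]].
have [l1 [d1 [d1_gt0 UN]]] := Uopen _ Upsi; have [l2 [d2 [d2_gt0 WN]]] := Wopen _ Wpsi.
exists (l1 ++ l2), (Num.min d1 d2); split; first by rewrite lt_min d1_gt0.
by move=> chi near_chi; split; [apply: UN (wnbhd_catl near_chi) | apply: WN (wnbhd_catr near_chi)].
Qed.

Lemma Kdense_openI U W : Kdense_open le U -> Kdense_open le W ->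
  Kdense_open le (fun chi => U chi /\ W chi).
Proof.
move=> [UO Udense] [WO Wdense]; split; first exact: KopenI.
move=> V VO V_neq0; have [chi [Vchi Uchi]] := Udense _ VO V_neq0.
have [chi' [[Vchi' Uchi'] Wchi']] := Wdense _ (KopenI VO UO) (ex_intro _ chi (conj Vchi Uchi)).
by exists chi'.
Qed.

Lemma Kdense_open_inK : Kdense_open le (@inK R le RR).
Proof.
have KO : Kopen le (@inK R le RR) by split=> // psi _; exists [::], 1; split=> // chi [].
by split=> // V [VK _] [chi Vchi]; exists chi; split=> //; apply: VK.
Qed.

Lemma Kcont_on_sub U W f : Kcont_on le U f -> (forall chi, W chi -> U chi) ->
  Kcont_on le W f.
Proof.
move=> fc WU psi Wpsi e e_gt0; have [l [d [d_gt0 near_f]]] := fc psi (WU _ Wpsi) e e_gt0.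
by exists l, d; split=> // chi /WU; apply: near_f.
Qed.

Lemma Kcont_on_const U (c : RR) : Kcont_on le U (fun=> c).
Proof. by move=> psi _ e e_gt0; exists [::], 1; split=> // chi _ _; rewrite subrr normr0. Qed.

Lemma Kcont_on_eval U r s : Kcont_on le U (fun chi => chi r s).
Proof.
move=> psi _ e e_gt0; exists [:: (r, s)], e; split=> // chi _ [_ near_chi].
by apply: (near_chi (r, s)); rewrite mem_head.
Qed.

Lemma Kcont_on_op (rop : RR -> RR -> RR) U f g :
  continuous (fun z : RR * RR => rop z.1 z.2) ->
  Kcont_on le U f -> Kcont_on le U g -> Kcont_on le U (fun chi => rop (f chi) (g chi)).
Proof.
move=> rop_cont fc gc psi Upsi e e_gt0.
have /cvgrPdist_lt/(_ e e_gt0)/nbhs_ballP[d d_gt0 near_rop] := rop_cont (f psi, g psi).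
have [l1 [d1 [d1_gt0 near_f]]] := fc psi Upsi d d_gt0.
have [l2 [d2 [d2_gt0 near_g]]] := gc psi Upsi d d_gt0.
exists (l1 ++ l2), (Num.min d1 d2); split; first by rewrite lt_min d1_gt0.
move=> chi Uchi near_chi; rewrite distrC; apply: (near_rop (f chi, g chi)).
by split; rewrite /ball /= distrC;
  [apply: near_f Uchi (wnbhd_catl near_chi) | apply: near_g Uchi (wnbhd_catr near_chi)].
Qed.

Lemma Kcont_le_dense U D f g phi : Kopen le U -> Kdense le D ->
  Kcont_on le U f -> Kcont_on le U g ->
  (forall chi, U chi -> D chi -> f chi <= g chi) -> U phi -> f phi <= g phi.
Proof.
move=> UO Ddense fc gc f_le_g Uphi; rewrite -subr_ge0 leNgt; apply/negP => gf_lt0.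
have gap_gt0 : 0 < - (g phi - f phi) by rewrite oppr_gt0.
have [l [d [d_gt0 near_gf]]] :=
  Kcont_on_op (rop := fun a b => a - b) (@sub_continuous RR) gc fc Uphi gap_gt0.
have [chi [[Uchi near_chi] Dchi]] : exists chi, (U chi /\ wnbhd le phi l d chi) /\ D chi.
  apply: Ddense; first exact: KopenI (wnbhd_open _ _ _).
  by exists phi; split=> //; apply: wnbhd_center d_gt0; apply: UO.1.
have := near_gf chi Uchi near_chi; have := f_le_g chi Uchi Dchi.
by have := ler_norm (g chi - f chi - (g phi - f phi)); lra.
Qed.

Lemma hat_rep_unique r U f U' f' phi : hat_rep le r U f -> hat_rep le r U' f' ->
  U phi -> U' phi -> f phi = f' phi.
Proof.
case=> [[UO _] fc [s [r_bd [W [WD WU fW]]]]].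
case=> [[UO' _] fc' [s' [r_bd' [W' [WD' WU' fW']]]]] Uphi U'phi.
have [_ WW'dense] := Kdense_openI WD WD'.
have UU'O := KopenI UO UO'.
have fc_UU' : Kcont_on le (fun chi => U chi /\ U' chi) f by apply: Kcont_on_sub fc _ => ? [].
have fc'_UU' : Kcont_on le (fun chi => U chi /\ U' chi) f' by apply: Kcont_on_sub fc' _ => ? [].
have f_eq chi : W chi /\ W' chi -> f chi = f' chi.
  case=> Wchi W'chi; have [_ [Kchi s_pos]] := WU _ Wchi; have [_ [_ s'_pos]] := WU' _ W'chi.
  by rewrite fW // fW' //; apply: r_s_indep.
apply: le_anti; apply/andP; split.
  by apply: (Kcont_le_dense UU'O WW'dense fc_UU' fc'_UU' _ (conj Uphi U'phi)) => chi _ /f_eq ->.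
by apply: (Kcont_le_dense UU'O WW'dense fc'_UU' fc_UU' _ (conj Uphi U'phi)) => chi _ /f_eq ->.
Qed.

Lemma hatphi_rep phi r U f : hat_rep le r U f -> U phi -> hatphi le phi r = f phi.
Proof.
move=> rep Uphi; apply: xget_unique; first by exists U, f.
by move=> c [U' [f' [rep' U'phi <-]]]; apply: hat_rep_unique rep' rep U'phi Uphi.
Qed.

Lemma hat_rep_op (bop : R -> R -> R) (rop : RR -> RR -> RR) x y U f U' f' :
  continuous (fun z : RR * RR => rop z.1 z.2) ->
  (forall x s y t, bdfrac le x s -> bdfrac le y t -> bdfrac le (bop x y) (s * t)) ->
  (forall psi x s y t, inK le psi -> bdfrac le x s -> bdfrac le y t ->
     0 < psi 1 s -> 0 < psi 1 t ->
     r_s (bop x y) (s * t) psi = rop (r_s x s psi) (r_s y t psi)) ->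
  hat_rep le x U f -> hat_rep le y U' f' ->
  hat_rep le (bop x y) (fun chi => U chi /\ U' chi) (fun chi => rop (f chi) (f' chi)).
Proof.
move=> rop_cont bop_bd r_s_op.
case=> [UD fc [s [x_s [W [WD WU fW]]]]] [U'D fc' [t [y_t [W' [WD' WU' fW']]]]].
split; first exact: Kdense_openI.
  by apply: Kcont_on_op; [|apply: Kcont_on_sub fc _|apply: Kcont_on_sub fc' _] => // ? [].
exists (s * t); split; first exact: bop_bd.
exists (fun chi => W chi /\ W' chi); split; first exact: Kdense_openI.
  move=> psi [/WU[Upsi [Kpsi s_pos]] /WU'[U'psi [_ t_pos]]]; split=> //; split=> //.
  by rewrite (inKMr Kpsi (bdfrac1 (bdfrac_isLoc x_s)) (bdfrac_isLoc y_t)) mulr_gt0.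
move=> psi [Wpsi W'psi]; have [_ [Kpsi s_pos]] := WU _ Wpsi; have [_ [_ t_pos]] := WU' _ W'psi.
by rewrite fW // fW' // r_s_op.
Qed.

Lemma hat_repD x y U f U' f' : hat_rep le x U f -> hat_rep le y U' f' ->
  hat_rep le (x + y) (fun chi => U chi /\ U' chi) (fun chi => f chi + f' chi).
Proof.
exact: (hat_rep_op (bop := fun a b => a + b) (rop := fun a b => a + b)
  (@add_continuous RR) (@bdfracDM) (@r_sD)).
Qed.

Lemma hat_repB x y U f U' f' : hat_rep le x U f -> hat_rep le y U' f' ->
  hat_rep le (x - y) (fun chi => U chi /\ U' chi) (fun chi => f chi - f' chi).
Proof.
exact: (hat_rep_op (bop := fun a b => a - b) (rop := fun a b => a - b)
  (@sub_continuous RR) (@bdfracBM) (@r_sB)).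
Qed.

Lemma hat_repM x y U f U' f' : hat_rep le x U f -> hat_rep le y U' f' ->
  hat_rep le (x * y) (fun chi => U chi /\ U' chi) (fun chi => f chi * f' chi).
Proof.
exact: (hat_rep_op (bop := fun a b => a * b) (rop := fun a b => a * b)
  (@mul_continuous RR) (@bdfracM) (@r_sM)).
Qed.

Lemma hat_rep1 : hat_rep le 1 (@inK R le RR) (fun=> 1).
Proof.
split; [exact: Kdense_open_inK | exact: Kcont_on_const |].
exists 1; split; first exact: bdfrac1 isLoc1.
exists (@inK R le RR); split; first exact: Kdense_open_inK.
  by move=> psi Kpsi; split=> //; split=> //; case: Kpsi => _ _ [_ _ -> _]; apply: ltr01.
by move=> psi [_ _ [_ _ psi1 _]]; rewrite /r_s psi1 invr1 mulr1.
Qed.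

Lemma hat_rep_ge0 x U f phi : hat_rep le x U f -> U phi -> le 0 x -> 0 <= f phi.
Proof.
case=> [[UO _] fc [s [x_s [W [[_ Wdense] WU fW]]]]] Uphi x_ge0.
have f_ge0 chi : U chi -> W chi -> 0 <= f chi.
  by move=> _ Wchi; rewrite fW //; apply: r_s_ge0 x_ge0 => //; case: (WU _ Wchi).
exact: (Kcont_le_dense UO Wdense (Kcont_on_const 0) fc f_ge0 Uphi).
Qed.

Lemma hat_rep_frac r s U f : hat_rep le s U f -> bdfrac le r s ->
  hat_rep le r U (fun chi => chi r s * f chi).
Proof.
case=> [UD fc [t [s_t [W [WD WU fW]]]]] r_bd.
split=> //.
  exact: (Kcont_on_op (rop := fun a b => a * b) (@mul_continuous RR) (@Kcont_on_eval U r s) fc).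
exists t; split; first exact: bdfrac_trans r_bd s_t.
exists W; split=> // psi Wpsi; have [_ [Kpsi _]] := WU _ Wpsi.
by rewrite fW // r_s_frac.
Qed.

Variable phi : R -> R -> RR.
Hypothesis Kphi : inK le phi.

Lemma dom_hatphi1 : dom_hatphi le phi 1.
Proof. by exists (@inK R le RR), (fun=> 1); split=> //; apply: hat_rep1. Qed.

Lemma dom_hatphiB x y : dom_hatphi le phi x -> dom_hatphi le phi y ->
  dom_hatphi le phi (x - y).
Proof.
move=> [U [f [rep Uphi]]] [U' [f' [rep' U'phi]]].
exists (fun chi => U chi /\ U' chi), (fun chi => f chi - f' chi).
by split; [apply: hat_repB | split].
Qed.

Lemma dom_hatphiM x y : dom_hatphi le phi x -> dom_hatphi le phi y ->
  dom_hatphi le phi (x * y).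
Proof.
move=> [U [f [rep Uphi]]] [U' [f' [rep' U'phi]]].
exists (fun chi => U chi /\ U' chi), (fun chi => f chi * f' chi).
by split; [apply: hat_repM | split].
Qed.

Lemma hatphi1 : hatphi le phi 1 = 1.
Proof. exact: hatphi_rep hat_rep1 Kphi. Qed.

Lemma hatphiD x y : dom_hatphi le phi x -> dom_hatphi le phi y ->
  hatphi le phi (x + y) = hatphi le phi x + hatphi le phi y.
Proof.
move=> [U [f [rep Uphi]]] [U' [f' [rep' U'phi]]].
by rewrite (hatphi_rep (hat_repD rep rep') (conj Uphi U'phi)) (hatphi_rep rep) ?(hatphi_rep rep').
Qed.

Lemma hatphiM x y : dom_hatphi le phi x -> dom_hatphi le phi y ->
  hatphi le phi (x * y) = hatphi le phi x * hatphi le phi y.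
Proof.
move=> [U [f [rep Uphi]]] [U' [f' [rep' U'phi]]].
by rewrite (hatphi_rep (hat_repM rep rep') (conj Uphi U'phi)) (hatphi_rep rep) ?(hatphi_rep rep').
Qed.

Lemma hatphi_ge0 x : dom_hatphi le phi x -> le 0 x -> 0 <= hatphi le phi x.
Proof.
by move=> [U [f [rep Uphi]]] x_ge0; rewrite (hatphi_rep rep) //; apply: hat_rep_ge0 rep Uphi x_ge0.
Qed.

Lemma dom_hatphi_frac r s : dom_hatphi le phi s -> bdfrac le r s -> dom_hatphi le phi r.
Proof.
move=> [U [f [rep Uphi]]] r_bd.
by exists U, (fun chi => chi r s * f chi); split=> //; apply: hat_rep_frac.
Qed.

End Localization.

Theorem proposition35 (R : comPzRingType) (le : R -> R -> Prop)
  (RR : realType) (phi : R -> R -> RR) :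
  po_comring le -> archimedean_po le -> localizable le -> inK le phi ->
  (* dom hat phi is a subring of R *)
  [/\ dom_hatphi le phi 1,
      (forall x y, dom_hatphi le phi x -> dom_hatphi le phi y ->
         dom_hatphi le phi (x - y)),
      (forall x y, dom_hatphi le phi x -> dom_hatphi le phi y ->
         dom_hatphi le phi (x * y)),
  (* hat phi is a positive ring morphism on it *)
      [/\ hatphi le phi 1 = 1,
          (forall x y, dom_hatphi le phi x -> dom_hatphi le phi y ->
             hatphi le phi (x + y) = hatphi le phi x + hatphi le phi y),
          (forall x y, dom_hatphi le phi x -> dom_hatphi le phi y ->
             hatphi le phi (x * y) = hatphi le phi x * hatphi le phi y) &
          (forall x, dom_hatphi le phi x -> le 0 x -> 0 <= hatphi le phi x)] &
  (* moreover part *)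
      (forall r s, dom_hatphi le phi s -> isLoc le s -> bdfrac le r s ->
         dom_hatphi le phi r)].
Proof.
(* Archimedean and localizable only guarantee that every [hat r] has
   representatives, which the claims here take as given; [isLoc s] is part of
   [bdfrac r s]. *)
move=> po _ _ Kphi; split.
- exact: dom_hatphi1.
- exact: dom_hatphiB.
- exact: dom_hatphiM.
- split; [exact: hatphi1 | exact: hatphiD | exact: hatphiM | exact: hatphi_ge0].
- by move=> r s dom_s _; apply: dom_hatphi_frac.
Qed.
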